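(* Let $Q$ be a finite quiver without loops with vertices $1,\dots,n$, let $\mathbf d=(d_1,\dots,d_n)$ be a dimension vector, let ${\boldsymbol\lambda}=(\lambda^1,\dots,\lambda^n)$ with $\lambda^i\vdash d_i$, and let $N=(N_i)$ be nilpotent linear operators on vector spaces $V_i$ of dimension $d_i$ with Jordan types $\lambda^i$. Consider the variety of representations of $Q$ with vector space $V_i$ at each vertex $i$ that are compatible with $N$ (i.e. $N_{t(a)}f_a=f_aN_{s(a)}$ for every arrow $a$). Then there are a dense open subset of this variety and a decomposition $\mathbf d=\mathbf d_1+\dots+\mathbf d_r$ such that every representation $M$ in this dense open set can be written as $M=M_1\oplus\dots\oplus M_r$ with each $M_j$ indecomposable and $\mathbf{dim}(M_j)=\mathbf d_j$ for all $j$.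
   Context: The ground field $\Bbbk$ is algebraically closed (standing assumption of the paper). *)

From HB Require Import structures.
From mathcomp Require Import all_boot all_order all_algebra.
From mathcomp Require Import mpoly.
Set Implicit Arguments. Unset Strict Implicit. Unset Printing Implicit Defensive.
Import GRing.Theory.
Local Open Scope ring_scope.

(* Vector space at vertex i is the row space
   F^(d i); a linear map V_(s a) -> V_(t a) is a matrix acting on row
   vectors on the right (v |-> v *m f). *)

Section Defs.
Variables (F : fieldType) (n : nat) (A : finType) (s t : A -> 'I_n)
          (d : 'I_n -> nat).

Definition rep := forall a : A, 'M[F]_(d (s a), d (t a)).

Definition coordT : finType := {a : A & ('I_(d (s a)) * 'I_(d (t a)))%type}.

Definition rep_coord (f : rep) (c : coordT) : F :=
  f (tag c) (tagged c).1 (tagged c).2.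

Definition peval (p : {mpoly F[#|coordT|]}) (f : rep) : F :=
  p.@[fun i => rep_coord f (enum_val i)].

Definition zopen_in (X U : rep -> Prop) : Prop :=
  exists ps : seq {mpoly F[#|coordT|]},
    forall f, U f <-> (X f /\ has (fun p => peval p f != 0) ps).

(* U is Zariski-dense in X : every polynomial vanishing on U vanishes on X
   (valid as a density criterion since X below is Zariski-closed) *)
Definition zdense_in (X U : rep -> Prop) : Prop :=
  (forall f, U f -> X f) /\
  forall p, (forall f, U f -> peval p f = 0) -> forall f, X f -> peval p f = 0.

(* representations compatible with N: N_(t a) f_a = f_a N_(s a) as maps *)
Definition compatible (N : forall i, 'M[F]_(d i)) (f : rep) : Prop :=
  forall a, f a *m N (t a) = N (s a) *m f a.

Definition subrep (N : forall i, 'M[F]_(d i)) (f : rep)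
  (W : forall i, 'M[F]_(d i)) : Prop :=
  (forall i, (W i *m N i <= W i)%MS) /\
  (forall a, (W (s a) *m f a <= W (t a))%MS).

Definition zero_sub (W : forall i, 'M[F]_(d i)) : Prop :=
  forall i, W i = 0.

Definition dsum2 (W U1 U2 : forall i, 'M[F]_(d i)) : Prop :=
  forall i, mxdirect (U1 i + U2 i) /\ (U1 i + U2 i == W i)%MS.

Definition indecomposable (N : forall i, 'M[F]_(d i)) (f : rep)
  (W : forall i, 'M[F]_(d i)) : Prop :=
  subrep N f W /\ ~ zero_sub W /\
  forall U1 U2, subrep N f U1 -> subrep N f U2 -> dsum2 W U1 U2 ->
    zero_sub U1 \/ zero_sub U2.

End Defs.

(* For a fixed type (r, dv), "f is the direct sum of r indecomposable subrepresentations of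
   dimension vectors dv_1, ..., dv_r" is a first-order property of the coordinates of f: the
   subrepresentations, their sums and directness, their ranks and the failure of any further
   splitting are all expressed by polynomial equations in auxiliary matrices over which one
   quantifies. Since F is algebraically closed, quantifier elimination makes each such property
   a finite union of sets cut out by polynomial equations and inequations. Every representation
   decomposes into indecomposables, and the possible types are bounded by the total dimension,
   so finitely many of these constructible sets cover the variety X of compatible
   representations. X is a linear space, hence irreducible: at a point of X avoiding every
   equation that does not vanish identically on X, the inequations of the clause it satisfies
   define a nonempty, hence dense, open subset of X of constant decomposition type. *)

From HB Require Import structures.
From mathcomp Require Import all_boot all_order all_algebra.
From mathcomp Require Import mpoly.
From mathcomp Require Import closed_field zify.
From Stdlib Require Import FunctionalExtensionality Classical.
Import GRing.Theory.
Local Open Scope ring_scope.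

Set Implicit Arguments.
Unset Strict Implicit.
Unset Printing Implicit Defensive.

(** * Decompositions into indecomposables *)

Definition decomp_type (n D : nat) : finType := {r : 'I_D.+1 & {ffun 'I_r * 'I_n -> 'I_D.+1}}.

Definition decomp_dims n D (l : decomp_type n D) : 'I_(tag l) -> 'I_n -> nat :=
  fun j i => tagged l (j, i).
Arguments decomp_dims {n D} l _ _.

Section Decomposition.
Variables (F : fieldType) (n : nat) (A : finType) (s t : A -> 'I_n) (d : 'I_n -> nat).
Variable N : forall i : 'I_n, 'M[F]_(d i).
Local Notation rep := (rep F s t d).
Local Notation fam := (forall i : 'I_n, 'M[F]_(d i)).

Definition decomposition (f : rep) (W : fam) r (V : 'I_r -> fam) : Prop :=
  (forall j, indecomposable N f (V j)) /\
  forall i, mxdirect (\sum_j V j i) /\ (\sum_j V j i == W i)%MS.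

Definition has_decomposition r (dv : 'I_r -> 'I_n -> nat) (f : rep) : Prop :=
  exists V, decomposition f (fun=> 1%:M) V /\ forall j i, \rank (V j i) = dv j i.

Definition total_rank (W : fam) : nat := (\sum_i \rank (W i))%N.

Lemma total_rank_gt0 (W : fam) : ~ zero_sub W -> (0 < total_rank W)%N.
Proof.
move=> nzW; rewrite lt0n sum_nat_eq0; apply: contra_notN nzW => /forallP W0 i.
by apply/eqP; rewrite -mxrank_eq0; apply: W0.
Qed.

Lemma dsum2_rank (W U1 U2 : fam) i : dsum2 W U1 U2 ->
  (\rank (U1 i) + \rank (U2 i))%N = \rank (W i).
Proof.
move=> /(_ i) [/mxdirect_addsP cap0 /eqmx_rank <-].
by rewrite -mxrank_sum_cap cap0 mxrank0 addn0.
Qed.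

Lemma dsum2_total_rank (W U1 U2 : fam) : dsum2 W U1 U2 ->
  total_rank W = (total_rank U1 + total_rank U2)%N.
Proof. by move=> WU; rewrite -big_split; apply: eq_bigr => i _; rewrite -(dsum2_rank i WU). Qed.

Definition cat_fam r1 r2 (V1 : 'I_r1 -> fam) (V2 : 'I_r2 -> fam) (j : 'I_(r1 + r2)) : fam :=
  match split j with inl j1 => V1 j1 | inr j2 => V2 j2 end.

Lemma big_cat_fam (R : Type) (idx : R) (op : Monoid.law idx) r1 r2
    (V1 : 'I_r1 -> fam) (V2 : 'I_r2 -> fam) (G : fam -> R) :
  \big[op/idx]_j G (cat_fam V1 V2 j) =
  op (\big[op/idx]_j G (V1 j)) (\big[op/idx]_j G (V2 j)).
Proof.
rewrite big_split_ord; congr (op _ _); apply: eq_bigr => j _; rewrite /cat_fam.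
  by rewrite -[lshift _ _]/(unsplit (inl j)) unsplitK.
by rewrite -[rshift _ _]/(unsplit (inr j)) unsplitK.
Qed.

Lemma decomposition0 (f : rep) (W : fam) :
  zero_sub W -> decomposition f W (fun (_ : 'I_0) _ => 0).
Proof. by move=> W0; split=> [[]//|i]; rewrite W0 mxdirectE /= !big_ord0 mxrank0 sub0mx. Qed.

Lemma decomposition1 (f : rep) (W : fam) :
  indecomposable N f W -> decomposition f W (fun _ : 'I_1 => W).
Proof. by move=> indW; split=> // i; rewrite mxdirectE /= !big_ord1 submx_refl. Qed.

Lemma decomposition_cat (f : rep) (W U1 U2 : fam) r1 r2 (V1 : 'I_r1 -> fam) (V2 : 'I_r2 -> fam) :
  dsum2 W U1 U2 -> decomposition f U1 V1 -> decomposition f U2 V2 ->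
  decomposition f W (cat_fam V1 V2).
Proof.
move=> WU [ind1 dec1] [ind2 dec2]; split=> [j|i]; first by rewrite /cat_fam; case: split.
have [[dir1 eq1] [dir2 eq2]] := (dec1 i, dec2 i).
have sumW : (\sum_j cat_fam V1 V2 j i :=: W i)%MS.
  rewrite (big_cat_fam _ _ _ (fun V => V i)).
  apply: eqmx_trans (adds_eqmx (eqmxP eq1) (eqmxP eq2)) _.
  by apply/eqmxP; case: (WU i).
split; last exact/eqmxP.
move: dir1 dir2; rewrite !mxdirectE /= (big_cat_fam _ _ _ (fun V => \rank (V i))) sumW.
by rewrite -(dsum2_rank i WU) -(eqmx_rank eq1) -(eqmx_rank eq2) => /eqP <- /eqP <-.
Qed.

Lemma exists_decomposition (f : rep) (W : fam) :
  subrep N f W -> exists r (V : 'I_r -> fam), decomposition f W V.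
Proof.
have [k] := ubnP (total_rank W); elim: k W => // k IH W; rewrite ltnS => Wk sW.
have [W0|nzW] := classic (zero_sub W); first by exists 0%N, (fun _ _ => 0); apply: decomposition0.
have [indW|not_indW] := classic (indecomposable N f W).
  by exists 1%N, (fun=> W); apply: decomposition1.
have [U1 [U2 [sU1 sU2 WU nz1 nz2]]] : exists U1 U2, [/\ subrep N f U1, subrep N f U2,
    dsum2 W U1 U2, ~ zero_sub U1 & ~ zero_sub U2].
  apply: NNPP => noU; apply: not_indW; do 2!split=> //.
  move=> U1 U2 sU1 sU2 WU; apply: NNPP => /not_or_and[nz1 nz2].
  by apply: noU; exists U1, U2.
have rankW := dsum2_total_rank WU.
have [pos1 pos2] := (total_rank_gt0 nz1, total_rank_gt0 nz2).
have [r1 [V1 dec1]] : exists r (V : 'I_r -> fam), decomposition f U1 V by apply: IH sU1; lia.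
have [r2 [V2 dec2]] : exists r (V : 'I_r -> fam), decomposition f U2 V by apply: IH sU2; lia.
by exists (r1 + r2)%N, (cat_fam V1 V2); apply: decomposition_cat WU dec1 dec2.
Qed.

Lemma mxdirect_sums_full r k (V : 'I_r -> 'M[F]_k) :
  mxdirect (\sum_j V j) /\ (\sum_j V j == 1%:M)%MS <->
  (\sum_j \rank (V j))%N = k /\ (1%:M <= \sum_j V j)%MS.
Proof.
have full : (1%:M <= \sum_j V j)%MS -> \rank (\sum_j V j)%MS = k.
  by move=> V1; rewrite -[RHS](mxrank1 F k); apply/eqmx_rank; rewrite submx1.
rewrite mxdirectE /= submx1; split=> [[/eqP dir V1]|[sum_k V1]]; split=> //.
  by rewrite -dir full.
by rewrite full // sum_k.
Qed.

Lemma has_decompositionP r (dv : 'I_r -> 'I_n -> nat) (f : rep) :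
  has_decomposition dv f <->
  exists V : 'I_r -> fam,
    (forall j, indecomposable N f (V j)) /\
    (forall i, (\sum_j dv j i)%N = d i /\ (1%:M <= \sum_j V j i)%MS) /\
    (forall j i, \rank (V j i) = dv j i).
Proof.
split=> [[V [[indV dirV] rkV]]|[V [indV [dirV rkV]]]]; exists V.
  split=> //; split=> // i; have /mxdirect_sums_full[rk V1] := dirV i.
  by split=> //; rewrite -[RHS]rk; apply: eq_bigr => j _; rewrite rkV.
split=> //; split=> // i; apply/mxdirect_sums_full.
by rewrite (eq_bigr (dv^~ i) (fun j _ => rkV j i)); case: (dirV i).
Qed.

Lemma has_decomposition_dim r (dv : 'I_r -> 'I_n -> nat) (f : rep) :
  has_decomposition dv f -> forall i, d i = (\sum_j dv j i)%N.
Proof.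
move=> [V [[_ decV] rkV]] i; have [dir eq1] := decV i.
rewrite -(mxrank1 F (d i)) -(eqmx_rank eq1); move: dir; rewrite mxdirectE /= => /eqP ->.
by apply: eq_bigr => j _; rewrite rkV.
Qed.

Lemma exists_decomp_type (f : rep) :
  exists l : decomp_type n (\sum_i d i), has_decomposition (decomp_dims l) f.
Proof.
have full : subrep N f (fun=> 1%:M) by split=> *; apply: submx1.
have [r [V [indV decV]]] := exists_decomposition full.
have rank_sum : (\sum_j total_rank (V j))%N = (\sum_i d i)%N.
  rewrite exchange_big; apply: eq_bigr => i _; have [dir eq1] := decV i.
  by move: dir; rewrite mxdirectE /= => /eqP <-; rewrite (eqmx_rank eq1) mxrank1.
have r_lt : (r < (\sum_i d i).+1)%N.
  rewrite ltnS -rank_sum -[X in (X <= _)%N]card_ord -sum1_card leq_sum // => j _.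
  by case: (indV j) => _ [/total_rank_gt0].
have rank_lt j i : (\rank (V j i) < (\sum_i d i).+1)%N.
  by rewrite ltnS (leq_trans (rank_leq_col _)) // (bigD1 i) //= leq_addr.
exists (existT (fun r : 'I_(\sum_i d i).+1 => {ffun 'I_r * 'I_n -> 'I_(\sum_i d i).+1})
          (Ordinal r_lt) [ffun ji : 'I_r * 'I_n => Ordinal (rank_lt ji.1 ji.2)]).
by exists V; split=> // j i; rewrite /decomp_dims ffunE.
Qed.

End Decomposition.

(** * First-order definability *)

Section Definability.
Variable F : fieldType.
Local Notation term := (GRing.term F).
Local Notation formula := (GRing.formula F).

Definition poly_fun (g : seq F -> F) : Prop :=
  exists2 u : term, GRing.rterm u & forall e, GRing.eval e u = g e.

Definition definable (P : seq F -> Prop) : Prop :=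
  exists2 phi : formula, GRing.rformula phi & forall e, GRing.holds e phi <-> P e.

Lemma poly_fun_ext g h : poly_fun g -> g =1 h -> poly_fun h.
Proof. by move=> [u ru hu] gh; exists u => // e; rewrite hu gh. Qed.

Lemma poly_fun_var j : poly_fun (fun e => nth 0 e j).
Proof. by exists (GRing.Var F j). Qed.

Lemma poly_fun_const c : poly_fun (fun=> c).
Proof. by exists (GRing.Const c). Qed.

Lemma poly_funD g h : poly_fun g -> poly_fun h -> poly_fun (fun e => g e + h e).
Proof.
by move=> [u ru hu] [v rv hv]; exists (GRing.Add u v) => [|e] /=; rewrite ?ru ?hu ?hv.
Qed.

Lemma poly_funM g h : poly_fun g -> poly_fun h -> poly_fun (fun e => g e * h e).
Proof.
by move=> [u ru hu] [v rv hv]; exists (GRing.Mul u v) => [|e] /=; rewrite ?ru ?hu ?hv.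
Qed.

Lemma poly_fun_sum (I : finType) (g : I -> seq F -> F) :
  (forall i, poly_fun (g i)) -> poly_fun (fun e => \sum_i g i e).
Proof.
move=> hg; elim: (index_enum I) => [|i r IH].
  by apply: poly_fun_ext (poly_fun_const 0) _ => e; rewrite big_nil.
by apply: poly_fun_ext (poly_funD (hg i) IH) _ => e; rewrite big_cons.
Qed.

Definition poly_mx p q (M : seq F -> 'M[F]_(p, q)) : Prop :=
  forall x y, poly_fun (fun e => M e x y).

Lemma poly_mx_const p q (C : 'M[F]_(p, q)) : poly_mx (fun=> C).
Proof. by move=> x y; apply: poly_fun_const. Qed.

Lemma poly_mxM p q k (M : seq F -> 'M[F]_(p, q)) (M' : seq F -> 'M[F]_(q, k)) :
  poly_mx M -> poly_mx M' -> poly_mx (fun e => M e *m M' e).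
Proof.
move=> hM hM' x y.
by apply: poly_fun_ext (poly_fun_sum (fun z => poly_funM (hM x z) (hM' z y))) _ => e; rewrite mxE.
Qed.

Lemma poly_mx_sum (I : finType) p q (M : I -> seq F -> 'M[F]_(p, q)) :
  (forall i, poly_mx (M i)) -> poly_mx (fun e => \sum_i M i e).
Proof.
by move=> hM x y; apply: poly_fun_ext (poly_fun_sum (fun i => hM i x y)) _ => e; rewrite summxE.
Qed.

Lemma poly_col_mx p1 p2 q (M1 : seq F -> 'M[F]_(p1, q)) (M2 : seq F -> 'M[F]_(p2, q)) :
  poly_mx M1 -> poly_mx M2 -> poly_mx (fun e => col_mx (M1 e) (M2 e)).
Proof.
move=> h1 h2 x y; rewrite -(splitK x); case: (split x) => [x1|x2].
  by apply: poly_fun_ext (h1 x1 y) _ => e; rewrite col_mxEu.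
by apply: poly_fun_ext (h2 x2 y) _ => e; rewrite col_mxEd.
Qed.

Lemma definable_ext P Q : definable P -> (forall e, P e <-> Q e) -> definable Q.
Proof. by move=> [phi rphi hphi] PQ; exists phi => // e; rewrite hphi. Qed.

Lemma definable_bool (b : bool) : definable (fun=> b).
Proof. by exists (GRing.Bool b). Qed.

Lemma definable_eq g h : poly_fun g -> poly_fun h -> definable (fun e => g e = h e).
Proof.
by move=> [u ru hu] [v rv hv]; exists (GRing.Equal u v) => [|e] /=; rewrite ?ru ?hu ?hv.
Qed.

Lemma definable_and P Q : definable P -> definable Q -> definable (fun e => P e /\ Q e).
Proof.
by move=> [f rf hf] [g rg hg]; exists (GRing.And f g) => [|e] /=; rewrite ?rf ?hf ?hg.
Qed.

Lemma definable_or P Q : definable P -> definable Q -> definable (fun e => P e \/ Q e).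
Proof.
by move=> [f rf hf] [g rg hg]; exists (GRing.Or f g) => [|e] /=; rewrite ?rf ?hf ?hg.
Qed.

Lemma definable_imply P Q : definable P -> definable Q -> definable (fun e => P e -> Q e).
Proof.
by move=> [f rf hf] [g rg hg]; exists (GRing.Implies f g) => [|e] /=; rewrite ?rf ?hf ?hg.
Qed.

Lemma definable_not P : definable P -> definable (fun e => ~ P e).
Proof. by move=> [f rf hf]; exists (GRing.Not f) => // e /=; rewrite hf. Qed.

Lemma definable_forall_fin (I : finType) (P : I -> seq F -> Prop) :
  (forall i, definable (P i)) -> definable (fun e => forall i, P i e).
Proof.
move=> hP; suff: definable (fun e => forall i, i \in enum I -> P i e).
  by move/definable_ext; apply=> e; split=> H i; [apply: H; rewrite mem_enum|].
elim: (enum I) => [|i r IH].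
  by apply: definable_ext (definable_bool true) _ => e.
apply: definable_ext (definable_and (hP i) IH) _ => e; split.
  by move=> [Hi Hr] j; rewrite inE => /predU1P[->|/Hr].
by move=> H; split=> [|j jr]; apply: H; rewrite inE ?eqxx ?jr ?orbT.
Qed.

Lemma definable_mx_eq p q (M M' : seq F -> 'M[F]_(p, q)) :
  poly_mx M -> poly_mx M' -> definable (fun e => M e = M' e).
Proof.
move=> hM hM'.
have := definable_forall_fin (fun xy : 'I_p * 'I_q => definable_eq (hM xy.1 xy.2) (hM' xy.1 xy.2)).
by move/definable_ext; apply=> e; split=> [H|-> //]; apply/matrixP=> x y; apply: (H (x, y)).
Qed.

Fixpoint set_block (e : seq F) (b : nat) (s : seq F) : seq F :=
  if s is x :: s' then set_block (set_nth 0 e b x) b.+1 s' else e.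

Lemma nth_set_block e b s i :
  nth 0 (set_block e b s) i =
    if (b <= i < b + size s)%N then nth 0 s (i - b) else nth 0 e i.
Proof.
elim: s e b => [|x s IH] e b /=.
  by rewrite addn0; case: ifP => // /andP[/leq_ltn_trans h /h]; rewrite ltnn.
rewrite IH nth_set_nth /=; case: (ltngtP i b) => [ib|bi|->] //=.
  by rewrite addSnnS -(subnSK bi).
by rewrite addnS ltnS leq_addr subnn.
Qed.

Lemma definable_exists_seq P b k :
  definable P -> definable (fun e => exists2 s, size s = k & P (set_block e b s)).
Proof.
elim: k b P => [|k IH] b P hP.
  by apply: definable_ext hP _ => e; split=> [H|[[|//] _ //]]; exists [::].
have [phi rphi hphi] := IH b.+1 P hP.
exists (GRing.Exists b phi) => // e /=; split.
  by move=> [x /hphi [s hs H]]; exists (x :: s); rewrite /= ?hs.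
by move=> [[|x s] // [hs] H]; exists x; apply/hphi; exists s.
Qed.

Lemma definable_forall_seq P b k :
  definable P -> definable (fun e => forall s, size s = k -> P (set_block e b s)).
Proof.
elim: k b P => [|k IH] b P hP.
  by apply: definable_ext hP _ => e; split=> [H [|//]|/(_ [::])]; last exact.
have [phi rphi hphi] := IH b.+1 P hP.
exists (GRing.Forall b phi) => // e /=; split.
  by move=> H [|x s] // [hs]; have /hphi := H x; apply.
by move=> H x; apply/hphi => s hs; apply: (H (x :: s)); rewrite /= hs.
Qed.

(* Formulas are evaluated in environments [e : seq F]: the coordinates of the representation
   come first, and each quantified matrix occupies a fresh block of variables above those in
   use. [below b R] means that [R] reads only the first [b] variables, so that filling the
   block starting at [b] leaves it unchanged. *)
Definition below (X : Type) (b : nat) (R : seq F -> X) : Prop :=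
  forall e e', (forall i, (i < b)%N -> nth 0 e i = nth 0 e' i) -> R e = R e'.

Lemma below_set_block X b (R : seq F -> X) e s : below b R -> R (set_block e b s) = R e.
Proof.
move=> hR; apply: hR => i ib; rewrite nth_set_block ifN //.
by rewrite negb_and -ltnNge ib.
Qed.

Lemma below_mono X b b' (R : seq F -> X) : (b <= b')%N -> below b R -> below b' R.
Proof. by move=> bb' hR e e' E; apply: hR => i ib; apply: E; apply: leq_trans bb'. Qed.

Definition encode (T : finType) (g : T -> F) : seq F := map g (enum T).

Definition decode (T : finType) (b : nat) (e : seq F) : T -> F :=
  fun c => nth 0 e (b + enum_rank c).

Lemma size_encode (T : finType) (g : T -> F) : size (encode g) = #|T|.
Proof. by rewrite size_map cardE. Qed.

Lemma nth_encode (T : finType) (g : T -> F) c : nth 0 (encode g) (enum_rank c) = g c.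
Proof. by rewrite (nth_map c) ?nth_enum_rank // -cardE. Qed.

Lemma decode_set_block (T : finType) b e (g : T -> F) :
  decode b (set_block e b (encode g)) = g.
Proof.
apply: functional_extensionality => c.
by rewrite /decode nth_set_block size_encode leq_addr ltn_add2l ltn_ord addKn nth_encode.
Qed.

Lemma below_decode (T : finType) b : below (b + #|T|) (@decode T b).
Proof.
by move=> e e' E; apply: functional_extensionality => c; apply: E; rewrite ltn_add2l.
Qed.

Section Quantifiers.
Variables (T : finType) (X : Type) (dec : (T -> F) -> X) (b : nat).
Variable P : X -> seq F -> Prop.
Hypotheses (dec_onto : forall x, exists g, dec g = x) (P_below : forall x, below b (P x)).

Lemma definable_exists :
  definable (fun e => P (dec (decode b e)) e) -> definable (fun e => exists x, P x e).
Proof.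
move=> /(definable_exists_seq b #|T|) hP; apply: definable_ext hP _ => e; split.
  move=> [s _ H]; exists (dec (decode b (set_block e b s))).
  by rewrite -(below_set_block e s (P_below _)).
move=> [x Hx]; have [g gx] := dec_onto x; exists (encode g); first exact: size_encode.
by rewrite decode_set_block gx (below_set_block e _ (P_below x)).
Qed.

Lemma definable_forall :
  definable (fun e => P (dec (decode b e)) e) -> definable (fun e => forall x, P x e).
Proof.
move=> /(definable_forall_seq b #|T|) hP; apply: definable_ext hP _ => e; split.
  move=> H x; have [g gx] := dec_onto x.
  by have := H _ (size_encode g); rewrite decode_set_block gx (below_set_block e _ (P_below x)).
by move=> H s _; rewrite (below_set_block e s (P_below _)).
Qed.

End Quantifiers.

Definition mx_reader b p q (M : seq F -> 'M[F]_(p, q)) : Prop := poly_mx M /\ below b M.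

Lemma mx_reader_mono b b' p q (M : seq F -> 'M[F]_(p, q)) :
  (b <= b')%N -> mx_reader b M -> mx_reader b' M.
Proof. by move=> bb' [pM bM]; split=> //; apply: below_mono bM. Qed.

Lemma mx_reader_const b p q (C : 'M[F]_(p, q)) : mx_reader b (fun=> C).
Proof. by split=> //; apply: poly_mx_const. Qed.

Lemma mx_readerM b p q k (M : seq F -> 'M[F]_(p, q)) (M' : seq F -> 'M[F]_(q, k)) :
  mx_reader b M -> mx_reader b M' -> mx_reader b (fun e => M e *m M' e).
Proof.
move=> [pM bM] [pM' bM']; split; first exact: poly_mxM.
by move=> e e' E; rewrite (bM _ _ E) (bM' _ _ E).
Qed.

Lemma mx_reader_col_mx b p1 p2 q (M1 : seq F -> 'M[F]_(p1, q)) (M2 : seq F -> 'M[F]_(p2, q)) :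
  mx_reader b M1 -> mx_reader b M2 -> mx_reader b (fun e => col_mx (M1 e) (M2 e)).
Proof.
move=> [p1M b1M] [p2M b2M]; split; first exact: poly_col_mx.
by move=> e e' E; rewrite (b1M _ _ E) (b2M _ _ E).
Qed.

Definition mx_of p q (g : 'I_p * 'I_q -> F) : 'M[F]_(p, q) := \matrix_(x, y) g (x, y).

Lemma mx_of_onto p q (M : 'M[F]_(p, q)) : exists g, mx_of g = M.
Proof. by exists (fun c => M c.1 c.2); apply/matrixP => x y; rewrite mxE. Qed.

Lemma mx_reader_decode b p q :
  mx_reader (b + #|{: 'I_p * 'I_q}|) (fun e => @mx_of p q (decode b e)).
Proof.
split; last by move=> e e' E; rewrite (below_decode E).
by move=> x y; apply: poly_fun_ext (poly_fun_var _) _ => e; rewrite mxE.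
Qed.

Definition mxfam_index (I : finType) (p q : I -> nat) : finType :=
  {i : I & ('I_(p i) * 'I_(q i))%type}.

Definition mxfam_of (I : finType) (p q : I -> nat) (g : mxfam_index p q -> F) :
    forall i, 'M[F]_(p i, q i) :=
  fun i => \matrix_(x, y) g (Tagged (fun i => ('I_(p i) * 'I_(q i))%type) (x, y)).

Lemma mxfam_of_onto (I : finType) (p q : I -> nat) (M : forall i, 'M[F]_(p i, q i)) :
  exists g, mxfam_of g = M.
Proof.
exists (fun c => M (tag c) (tagged c).1 (tagged c).2).
by apply: functional_extensionality_dep => i; apply/matrixP => x y; rewrite mxE.
Qed.

Definition family_reader b (I : finType) (p q : I -> nat)
    (W : seq F -> forall i, 'M[F]_(p i, q i)) : Prop :=
  forall i, mx_reader b (fun e => W e i).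

Lemma below_family b (I : finType) (p q : I -> nat) (W : seq F -> forall i, 'M[F]_(p i, q i)) :
  family_reader b W -> below b W.
Proof. by move=> hW e e' E; apply: functional_extensionality_dep => i; apply: (hW i).2. Qed.

Lemma family_reader_mono b b' (I : finType) (p q : I -> nat)
    (W : seq F -> forall i, 'M[F]_(p i, q i)) :
  (b <= b')%N -> family_reader b W -> family_reader b' W.
Proof. by move=> bb' hW i; apply: mx_reader_mono bb' (hW i). Qed.

Lemma family_reader_decode b (I : finType) (p q : I -> nat) :
  family_reader (b + #|mxfam_index p q|) (fun e => @mxfam_of I p q (decode b e)).
Proof.
move=> i; split; last by move=> e e' E; rewrite (below_decode E).
by move=> x y; apply: poly_fun_ext (poly_fun_var _) _ => e; rewrite mxE.
Qed.

End Definability.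

Section MatrixDefinability.
Variable F : fieldType.

Lemma mxdirect_adds_rowP p q k (X : 'M[F]_(p, k)) (Y : 'M[F]_(q, k)) :
  mxdirect (X + Y) <-> forall (u : 'rV_p) (v : 'rV_q), u *m X = v *m Y -> u *m X = 0.
Proof.
split=> [/mxdirect_addsP XY0 u v uv|H].
  by apply/eqP; rewrite -submx0 -XY0 sub_capmx submxMl uv submxMl.
apply/mxdirect_addsP/eqP; rewrite -submx0; apply/rV_subP => w.
rewrite sub_capmx => /andP[/submxP[u ->] /submxP[v uv]].
by rewrite (H u v uv) sub0mx.
Qed.

Lemma mxrank_eq_rowP p k (X : 'M[F]_(p, k)) r :
  \rank X = r <->
  exists (B : 'M[F]_(r, k)) (C : 'M[F]_(k, r)), B *m C = 1%:M /\ (B <= X)%MS /\ (X <= B)%MS.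
Proof.
split=> [<-|[B [C [BC [BX XB]]]]].
  have [C BC] := row_freeP (row_base_free X).
  by exists (row_base X), C; rewrite !eq_row_base.
have rB : \rank B = r by apply/eqP/row_freeP; exists C.
by rewrite -rB; apply/eqmx_rank; rewrite BX XB.
Qed.

Lemma definable_submx b p q k (X : seq F -> 'M[F]_(p, k)) (Y : seq F -> 'M[F]_(q, k)) :
  mx_reader b X -> mx_reader b Y -> definable (fun e => (X e <= Y e)%MS).
Proof.
move=> [pX bX] [pY bY].
apply: (definable_ext (P := fun e => exists D, X e = D *m Y e)); last first.
  by move=> e; split=> [[D ->]|/submxP]; [apply: submxMl|].
apply: (definable_exists (b := b) (@mx_of_onto F p q)) => [D e e' E|].
  by rewrite (bX _ _ E) (bY _ _ E).
by apply: definable_mx_eq pX _; apply: poly_mxM pY; case: (mx_reader_decode F b p q).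
Qed.

Lemma definable_mxdirect_adds b p q k (X : seq F -> 'M[F]_(p, k)) (Y : seq F -> 'M[F]_(q, k)) :
  mx_reader b X -> mx_reader b Y -> definable (fun e => mxdirect (X e + Y e)).
Proof.
move=> hX hY; apply: definable_ext _ (fun e => iff_sym (mxdirect_adds_rowP (X e) (Y e))).
set b1 := (b + #|{: 'I_1 * 'I_p}|)%N.
have hU := mx_reader_decode F b 1 p; have hV := mx_reader_decode F b1 1 q.
have [[pX bX] [pY bY]] : mx_reader b1 X /\ mx_reader b1 Y.
  by split; [apply: mx_reader_mono _ hX|apply: mx_reader_mono _ hY]; rewrite /b1 leq_addr.
apply: (definable_forall (b := b) (@mx_of_onto F 1 p)) => [u e e' E|].
  by rewrite (hX.2 _ _ E) (hY.2 _ _ E).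
apply: (definable_forall (b := b1) (@mx_of_onto F 1 q)) => [v e e' E|].
  by rewrite (bX _ _ E) (bY _ _ E) (hU.2 _ _ E).
have pUX := poly_mxM hU.1 pX.
apply: definable_imply; first exact: definable_mx_eq pUX (poly_mxM hV.1 pY).
by apply: definable_mx_eq pUX _; apply: poly_mx_const.
Qed.

Lemma definable_mxrank_eq b p k (X : seq F -> 'M[F]_(p, k)) r :
  mx_reader b X -> definable (fun e => \rank (X e) = r).
Proof.
move=> hX; apply: definable_ext _ (fun e => iff_sym (mxrank_eq_rowP (X e) r)).
set b1 := (b + #|{: 'I_r * 'I_k}|)%N; set b2 := (b1 + #|{: 'I_k * 'I_r}|)%N.
have hB := mx_reader_decode F b r k; have hC := mx_reader_decode F b1 k r.
have hX1 : mx_reader b1 X by apply: mx_reader_mono _ hX; rewrite /b1 leq_addr.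
have hX2 : mx_reader b2 X by apply: mx_reader_mono _ hX1; rewrite /b2 leq_addr.
have hB2 : mx_reader b2 (fun e => @mx_of F r k (decode b e)).
  by apply: mx_reader_mono _ hB; rewrite /b2 leq_addr.
apply: (definable_exists (b := b) (@mx_of_onto F r k)) => [B e e' E|].
  by rewrite (hX.2 _ _ E).
apply: (definable_exists (b := b1) (@mx_of_onto F k r)) => [C e e' E|].
  by rewrite (hX1.2 _ _ E) (hB.2 _ _ E).
apply: definable_and.
  by apply: definable_mx_eq (poly_mx_const _); apply: poly_mxM hB.1 hC.1.
by apply: definable_and; [apply: definable_submx hB2 hX2|apply: definable_submx hX2 hB2].
Qed.

Lemma definable_sub_sumsmx b r p k (X : seq F -> 'M[F]_(p, k)) (V : seq F -> 'I_r -> 'M[F]_k) :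
  mx_reader b X -> (forall j, mx_reader b (fun e => V e j)) ->
  definable (fun e => (X e <= \sum_j V e j)%MS).
Proof.
move=> hX hV.
apply: (definable_ext (P := fun e => exists u : 'I_r -> 'M_(p, k), X e = \sum_j u j *m V e j)).
  apply: (definable_exists (b := b) (@mxfam_of_onto F 'I_r (fun=> p) (fun=> k))) => [u e e' E|].
    by rewrite (hX.2 _ _ E); congr (_ = _); apply: eq_bigr => j _; rewrite ((hV j).2 _ _ E).
  apply: definable_mx_eq hX.1 _; apply: poly_mx_sum => j; apply: poly_mxM (hV j).1.
  exact: (family_reader_decode F b (fun=> p) (fun=> k) j).1.
by move=> e; split=> [[u ->]|/sub_sumsmxP//]; apply/sub_sumsmxP; exists u.
Qed.

End MatrixDefinability.

Section RepresentationDefinability.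
Variables (F : fieldType) (n : nat) (A : finType) (s t : A -> 'I_n) (d : 'I_n -> nat).
Variable N : forall i : 'I_n, 'M[F]_(d i).
Local Notation rep := (rep F s t d).
Local Notation fam := (forall i : 'I_n, 'M[F]_(d i)).

Lemma definable_subrep b (f : seq F -> rep) (W : seq F -> fam) :
  family_reader b f -> family_reader b W -> definable (fun e => subrep N (f e) (W e)).
Proof.
move=> hf hW; apply: definable_and; apply: definable_forall_fin.
  by move=> i; apply: definable_submx (mx_readerM (hW i) (mx_reader_const b (N i))) (hW i).
by move=> a; apply: definable_submx (mx_readerM (hW (s a)) (hf a)) (hW (t a)).
Qed.

Lemma definable_zero_sub b (W : seq F -> fam) :
  family_reader b W -> definable (fun e => zero_sub (W e)).
Proof.
by move=> hW; apply: definable_forall_fin => i; apply: definable_mx_eq (hW i).1 (poly_mx_const _).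
Qed.

Lemma definable_dsum2 b (W U1 U2 : seq F -> fam) :
  family_reader b W -> family_reader b U1 -> family_reader b U2 ->
  definable (fun e => dsum2 (W e) (U1 e) (U2 e)).
Proof.
move=> hW h1 h2; apply: definable_forall_fin => i; apply: definable_and.
  exact: definable_mxdirect_adds (h1 i) (h2 i).
apply: (definable_ext (P := fun e => (U1 e i <= W e i)%MS /\ (U2 e i <= W e i)%MS /\
                                      (W e i <= col_mx (U1 e i) (U2 e i))%MS)).
  apply: definable_and; first exact: definable_submx (h1 i) (hW i).
  apply: definable_and; first exact: definable_submx (h2 i) (hW i).
  exact: definable_submx (hW i) (mx_reader_col_mx (h1 i) (h2 i)).
by move=> e; rewrite addsmx_sub addsmxE; split=> [[-> [-> ->]]|/andP[/andP[-> ->] ->]].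
Qed.

Lemma definable_indecomposable b (f : seq F -> rep) (W : seq F -> fam) :
  family_reader b f -> family_reader b W -> definable (fun e => indecomposable N (f e) (W e)).
Proof.
move=> hf hW; apply: definable_and; first exact: definable_subrep hf hW.
apply: definable_and; first exact/definable_not/(definable_zero_sub hW).
set b1 := (b + #|mxfam_index d d|)%N; set b2 := (b1 + #|mxfam_index d d|)%N.
have hU1 := family_reader_decode F b d d; have hU2 := family_reader_decode F b1 d d.
have bb1 : (b <= b1)%N by rewrite /b1 leq_addr.
have b1b2 : (b1 <= b2)%N by rewrite /b2 leq_addr.
have [hf1 hW1] := conj (family_reader_mono bb1 hf) (family_reader_mono bb1 hW).
have [hf2 hW2] := conj (family_reader_mono b1b2 hf1) (family_reader_mono b1b2 hW1).
have hU12 := family_reader_mono b1b2 hU1.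
apply: (definable_forall (b := b) (@mxfam_of_onto F 'I_n d d)) => [U1 e e' E|].
  by rewrite (below_family hf E) (below_family hW E).
apply: (definable_forall (b := b1) (@mxfam_of_onto F 'I_n d d)) => [U2 e e' E|].
  by rewrite (below_family hf1 E) (below_family hW1 E) (below_family hU1 E).
apply: definable_imply; first exact: definable_subrep hf2 hU12.
apply: definable_imply; first exact: definable_subrep hf2 hU2.
apply: definable_imply; first exact: definable_dsum2 hW2 hU12 hU2.
exact: definable_or (definable_zero_sub hU12) (definable_zero_sub hU2).
Qed.

Lemma definable_has_decomposition b (f : seq F -> rep) r (dv : 'I_r -> 'I_n -> nat) :
  family_reader b f -> definable (fun e => has_decomposition N dv (f e)).
Proof.
move=> hf; apply: definable_ext _ (fun e => iff_sym (has_decompositionP N dv (f e))).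
pose dec (g : mxfam_index (fun ji : 'I_r * 'I_n => d ji.2) (fun ji => d ji.2) -> F) :
  'I_r -> fam := fun j i => mxfam_of g (j, i).
have dec_onto V : exists g, dec g = V.
  by have [g gV] := mxfam_of_onto (fun ji : 'I_r * 'I_n => V ji.1 ji.2); exists g; rewrite /dec gV.
set b1 := (b + #|mxfam_index (fun ji : 'I_r * 'I_n => d ji.2) (fun ji => d ji.2)|)%N.
have hV j : family_reader b1 (fun e => dec (decode b e) j).
  by move=> i; apply: (family_reader_decode F b _ _ (j, i)).
have hf1 : family_reader b1 f by apply: family_reader_mono hf; rewrite /b1 leq_addr.
apply: (definable_exists (b := b) dec_onto) => [V e e' E|].
  by rewrite (below_family hf E).
apply: definable_and.
  by apply: definable_forall_fin => j; apply: definable_indecomposable hf1 (hV j).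
apply: definable_and; apply: definable_forall_fin.
  move=> i; apply: definable_and; last exact: definable_sub_sumsmx (mx_reader_const _ _) (hV ^~ i).
  by apply: definable_ext (definable_bool _ (\sum_j dv j i == d i)%N) _ => e; split=> /eqP.
by move=> j; apply: definable_forall_fin => i; apply: definable_mxrank_eq (hV j i).
Qed.

End RepresentationDefinability.

(** * Quantifier elimination and generic representations *)

Section QuantifierElimination.
Variable F : closedFieldType.
Local Notation term := (GRing.term F).

Definition dnf_eval (e : seq F) (bcs : seq (seq term * seq term)) : bool :=
  has (fun bc => all (fun u => GRing.eval e u == 0) bc.1 &&
                 all (fun u => GRing.eval e u != 0) bc.2) bcs.

Lemma qf_eval_dnf_to_form e bcs : GRing.qf_eval e (GRing.dnf_to_form bcs) = dnf_eval e bcs.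
Proof.
elim: bcs => [|[l1 l2] bcs IH] //=; rewrite IH; congr (_ && _ || _).
  by elim: l1 => //= u l ->.
by elim: l2 => //= u l ->.
Qed.

Lemma definable_dnf (P : seq F -> Prop) : definable P ->
  exists2 bcs, all GRing.dnf_rterm bcs & forall e, P e <-> dnf_eval e bcs.
Proof.
move=> [phi rphi hphi].
have QE := GRing.quantifier_elim_rformP (@ClosedFieldQE.wf_ex_elim F)
             (ClosedFieldQE.holds_ex_elim (@solve_monicpoly F)).
pose psi := GRing.quantifier_elim (@ClosedFieldQE.ex_elim F) phi.
have /andP[qf_psi r_psi] := GRing.quantifier_elim_wf (@ClosedFieldQE.wf_ex_elim F) rphi.
exists (GRing.qf_to_dnf psi false); first exact: GRing.qf_to_dnf_rterm.
move=> e; rewrite -qf_eval_dnf_to_form GRing.qf_to_dnfP ?qf_psi // -hphi.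
by split=> /(QE e _ rphi).
Qed.

End QuantifierElimination.

Section GenericRepresentations.
Variables (F : closedFieldType) (n : nat) (A : finType) (s t : A -> 'I_n) (d : 'I_n -> nat).
Variable N : forall i : 'I_n, 'M[F]_(d i).
Local Notation term := (GRing.term F).
Local Notation m := #|coordT s t d|.
Local Notation rep := (rep F s t d).
Local Notation X := (compatible N).

Definition coord_env (f : rep) : seq F := encode (rep_coord f).

Definition rep_of_env (e : seq F) : rep :=
  @mxfam_of F A (fun a => d (s a)) (fun a => d (t a)) (decode 0 e).

Lemma rep_of_coord_env f : rep_of_env (coord_env f) = f.
Proof.
apply: functional_extensionality_dep => a; apply/matrixP => x y.
by rewrite mxE /decode add0n nth_encode.
Qed.

Lemma family_reader_rep_of_env : family_reader m rep_of_env.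
Proof. exact: family_reader_decode. Qed.

(* Variables past the coordinates are sent to 0, which is also their value in [coord_env f];
   inverses do not occur in the [rterm]s to which [term_mpoly] is applied. *)
Fixpoint term_mpoly (u : term) : {mpoly F[m]} :=
  match u with
  | GRing.Var j => if insub j is Some i then 'X_i else 0
  | GRing.Const c => c%:MP
  | GRing.NatConst k => k%:R
  | GRing.Add u1 u2 => term_mpoly u1 + term_mpoly u2
  | GRing.Opp u1 => - term_mpoly u1
  | GRing.NatMul u1 k => term_mpoly u1 *+ k
  | GRing.Mul u1 u2 => term_mpoly u1 * term_mpoly u2
  | GRing.Inv _ => 0
  | GRing.Exp u1 k => term_mpoly u1 ^+ k
  end.

Lemma peval_term_mpoly u f :
  GRing.rterm u -> peval (term_mpoly u) f = GRing.eval (coord_env f) u.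
Proof.
rewrite /peval; elim: u => //=.
- move=> j _; case: insubP => [i _ <-|j_ge_m].
    by rewrite mevalXU /coord_env -[in RHS](enum_valK i) nth_encode.
  by rewrite meval0 nth_default // size_encode leqNgt.
- by move=> c _; rewrite mevalC.
- by move=> k _; rewrite rmorph_nat.
- by move=> u1 IH1 u2 IH2 /andP[/IH1 <- /IH2 <-]; rewrite mevalD.
- by move=> u1 IH1 /IH1 <-; rewrite mevalN.
- by move=> u1 IH1 k /IH1 <-; rewrite mevalMn.
- by move=> u1 IH1 u2 IH2 /andP[/IH1 <- /IH2 <-]; rewrite mevalM.
- by move=> u1 IH1 k /IH1 <-; rewrite rmorphXn.
Qed.

Definition dnf_holds (f : rep) (cls : seq (seq {mpoly F[m]} * seq {mpoly F[m]})) : bool :=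
  has (fun c => all (fun p => peval p f == 0) c.1 && all (fun p => peval p f != 0) c.2) cls.

Lemma definable_constructible (P : seq F -> Prop) : definable P ->
  exists cls, forall f, P (coord_env f) <-> dnf_holds f cls.
Proof.
move=> /definable_dnf[bcs r_bcs hbcs].
exists [seq (map term_mpoly bc.1, map term_mpoly bc.2) | bc <- bcs] => f; rewrite hbcs.
suff -> : dnf_eval (coord_env f) bcs =
          dnf_holds f [seq (map term_mpoly bc.1, map term_mpoly bc.2) | bc <- bcs] by [].
elim: bcs r_bcs {hbcs} => [|[l1 l2] bcs IH] //= /andP[/andP[/= r1 r2] /IH ->].
congr (_ && _ || _).
  by elim: l1 r1 => //= u l IHl /andP[ru /IHl ->]; rewrite peval_term_mpoly.
by elim: l2 r2 => //= u l IHl /andP[ru /IHl ->]; rewrite peval_term_mpoly.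
Qed.

Lemma pevalM (p q : {mpoly F[m]}) (f : rep) : peval (p * q) f = peval p f * peval q f.
Proof. exact: mevalM. Qed.

Lemma peval_prod (r : seq {mpoly F[m]}) (f : rep) :
  peval (\prod_(p <- r) p) f = \prod_(p <- r) peval p f.
Proof. exact: rmorph_prod. Qed.

Definition line (f g : rep) (l : F) : rep := fun a => f a + l *: (g a - f a).

Lemma compatible_line (f g : rep) l : X f -> X g -> X (line f g l).
Proof.
move=> Xf Xg a; rewrite /line mulmxDl mulmxDr -scalemxAl -scalemxAr mulmxBl mulmxBr.
by rewrite Xf Xg.
Qed.

Lemma line0 (f g : rep) : line f g 0 = f.
Proof. by apply: functional_extensionality_dep => a; rewrite /line scale0r addr0. Qed.

Lemma line1 (f g : rep) : line f g 1 = g.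
Proof. by apply: functional_extensionality_dep => a; rewrite /line scale1r addrC subrK. Qed.

Definition line_poly (f g : rep) (p : {mpoly F[m]}) : {poly F} :=
  mmap polyC (fun i => (rep_coord f (enum_val i))%:P +
                       (rep_coord g (enum_val i) - rep_coord f (enum_val i)) *: 'X) p.

Lemma horner_line_poly (f g : rep) p l : (line_poly f g p).[l] = peval p (line f g l).
Proof.
rewrite /line_poly /peval mevalE /mmap -[_.[l]]/(horner_eval l _) rmorph_sum.
apply: eq_bigr => mm _; rewrite rmorphM /= /horner_eval hornerC; congr (_ * _).
rewrite /mmap1 -/(horner_eval l _) rmorph_prod; apply: eq_bigr => i _.
rewrite rmorphXn /= /horner_eval hornerD hornerC hornerZ hornerX.
by rewrite /rep_coord /line !mxE mulrC.
Qed.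

(* On the line through f and g, which stays in the linear space X, p and q restrict to nonzero
   univariate polynomials, and these have a common non-root since F is algebraically closed. *)
Lemma compatible_irreducible (p q : {mpoly F[m]}) (f g : rep) :
  X f -> X g -> peval p f != 0 -> peval q g != 0 -> exists2 h, X h & peval (p * q) h != 0.
Proof.
move=> Xf Xg pf qg; pose P := line_poly f g p; pose Q := line_poly f g q.
have P0 : P != 0.
  by apply: contraNneq pf => P0; rewrite -(line0 f g) -horner_line_poly -/P P0 horner0.
have Q0 : Q != 0.
  by apply: contraNneq qg => Q0; rewrite -(line1 f g) -horner_line_poly -/Q Q0 horner0.
have [l PQl] := closed_nonrootP _ (mulf_neq0 P0 Q0).
exists (line f g l); first exact: compatible_line.
by rewrite pevalM -!horner_line_poly -hornerM.
Qed.

Lemma generic_zeros (ps : seq {mpoly F[m]}) :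
  exists q : {mpoly F[m]}, (exists2 f : rep, X f & peval q f != 0) /\
    forall f : rep, X f -> peval q f != 0 ->
      forall p, p \in ps -> peval p f = 0 -> forall g : rep, X g -> peval p g = 0.
Proof.
elim: ps => [|p ps [q [[f0 Xf0 qf0] hq]]].
  exists 1; split=> [|//]; exists (fun=> 0); first by move=> a; rewrite mul0mx mulmx0.
  by rewrite /peval meval1 oner_neq0.
have [[g Xg pg]|p_van] := classic (exists2 g : rep, X g & peval p g != 0); last first.
  exists q; split=> [|f Xf qf p']; first by exists f0.
  rewrite inE => /predU1P[-> _ h Xh|]; last exact: hq.
  by apply/eqP; apply: contraT => ph; case: p_van; exists h.
exists (q * p); split; first exact: compatible_irreducible Xf0 Xg qf0 pg.
move=> f Xf; rewrite pevalM mulf_eq0 negb_or => /andP[qf pf] p'.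
by rewrite inE => /predU1P[-> /eqP|]; [rewrite (negbTE pf)|exact: hq].
Qed.

(* Choose q by [generic_zeros] for all equations occurring in the DNFs of the [Q l]. A point f0
   with q f0 != 0 satisfies some clause c of some [Q l]; the equations of c vanish at f0, hence
   on all of X, so the product of the inequations of c defines the required open set. *)
Lemma generic_definable (L : finType) (Q : L -> seq F -> Prop) :
  (forall l, definable (Q l)) -> (forall f : rep, X f -> exists l, Q l (coord_env f)) ->
  exists l (q : {mpoly F[m]}), (exists2 f : rep, X f & peval q f != 0) /\
    forall f : rep, X f -> peval q f != 0 -> Q l (coord_env f).
Proof.
move=> Qdef Qcover.
have [cls hcls] := fin_all_exists (fun l => definable_constructible (Qdef l)).
pose eqs := flatten [seq flatten [seq c.1 | c <- cls l] | l <- enum L].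
have [q [[f0 Xf0 qf0] hq]] := generic_zeros eqs.
have [l Qlf0] := Qcover f0 Xf0.
have /hasP[c c_cls /andP[/allP c1 /allP c2]] := (hcls l f0).1 Qlf0.
have c1_van p : p \in c.1 -> forall f : rep, X f -> peval p f = 0.
  move=> pc1; apply: (hq f0 Xf0 qf0 p _ (eqP (c1 p pc1))).
  apply/flattenP; exists (flatten [seq c.1 | c <- cls l]).
    by apply/mapP; exists l; rewrite ?mem_enum.
  by apply/flattenP; exists c.1 => //; apply/mapP; exists c.
exists l, (\prod_(p <- c.2) p); split.
  by exists f0; rewrite // peval_prod prodf_seq_neq0; apply/allP.
move=> f Xf; rewrite peval_prod prodf_seq_neq0 => /allP c2f.
apply/(hcls l f)/hasP; exists c => //; apply/andP; split; apply/allP => p pc.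
  by rewrite c1_van.
exact: c2f.
Qed.

Definition basic_open (q : {mpoly F[m]}) (f : rep) : Prop := X f /\ peval q f != 0.

Lemma basic_open_zopen q : zopen_in X (basic_open q).
Proof. by exists [:: q] => f; rewrite /= orbF. Qed.

Lemma basic_open_zdense q (f0 : rep) : X f0 -> peval q f0 != 0 -> zdense_in X (basic_open q).
Proof.
move=> Xf0 qf0; split=> [f []//|p p_van f Xf]; apply/eqP; apply: contraT => pf.
have [h Xh] := compatible_irreducible Xf Xf0 pf qf0.
rewrite pevalM mulf_eq0 negb_or => /andP[ph qh].
by rewrite (p_van h (conj Xh qh)) eqxx in ph.
Qed.

End GenericRepresentations.

Theorem theorem2p4 (F : closedFieldType) (n : nat) (A : finType)
  (s t : A -> 'I_n) (noloop : forall a, s a != t a) (d : 'I_n -> nat)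
  (N : forall i : 'I_n, 'M[F]_(d i))
  (Nnil : forall i, exists k : nat, N i ^+ k = 0) :
  exists (U : rep F s t d -> Prop) (r : nat) (dv : 'I_r -> 'I_n -> nat),
    zopen_in (compatible N) U /\ zdense_in (compatible N) U /\
    (forall i, d i = (\sum_(j < r) dv j i)%N) /\
    forall f, U f ->
      exists W : 'I_r -> forall i : 'I_n, 'M[F]_(d i),
        (forall j, indecomposable N f (W j)) /\
        (forall i, mxdirect (\sum_(j < r) W j i) /\
                   (\sum_(j < r) W j i == 1%:M)%MS) /\
        (forall j i, \rank (W j i) = dv j i).
Proof.
pose Q (l : decomp_type n (\sum_i d i)) e :=
  has_decomposition N (decomp_dims l) (rep_of_env s t d e).
have Qdef l : definable (Q l) :=
  definable_has_decomposition N (decomp_dims l) (family_reader_rep_of_env F s t d).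
have Qcover (f : rep F s t d) : compatible N f -> exists l, Q l (coord_env f).
  by move=> _; have [l dec_f] := exists_decomp_type N f; exists l; rewrite /Q /= rep_of_coord_env.
have [l [q [[f0 Xf0 qf0] hq]]] := generic_definable Qdef Qcover.
have decU (f : rep F s t d) : basic_open N q f -> has_decomposition N (decomp_dims l) f.
  by move=> [Xf qf]; rewrite -(rep_of_coord_env f); apply: hq.
exists (basic_open N q), (tag l), (decomp_dims l); split; first exact: basic_open_zopen.
split; first exact: basic_open_zdense Xf0 qf0.
split; first exact: has_decomposition_dim (decU f0 (conj Xf0 qf0)).
by move=> f /decU[V [[indV dirV] rkV]]; exists V.
Qed.
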